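(* Let $k$ be a field and let $X$ be a $\mathcal{T}$-space. Then $\rho^{-1}\circ\rho_*\simeq\mathrm{id}_{\mathrm{Mod}(k_X)}$. In particular the functor $\rho_*:\mathrm{Mod}(k_X)\to\mathrm{Mod}(k_\mathcal{T})$ is fully faithful.
   Context: Let $X$ be a topological space and $\mathcal{T}$ a family of open subsets of $X$. A $\mathcal{T}$-subset of $X$ is a finite Boolean combination of elements of $\mathcal{T}$; a $\mathcal{T}$-connected subset is a $\mathcal{T}$-subset which is not the disjoint union of two proper $\mathcal{T}$-subsets that are both open and closed in it. $X$ is a $\mathcal{T}$-space if (i) $\mathcal{T}$ is a basis of the topology of $X$ and $\emptyset\in\mathcal{T}$; (ii) $\mathcal{T}$ is closed under finite unions and finite intersections; (iii) every $U\in\mathcal{T}$ has finitely many $\mathcal{T}$-connected components. $X_\mathcal{T}$ is the site whose underlying category is $\mathcal{T}$ (morphisms are inclusions), a family $\{U_i\}\subset\mathcal{T}$ of subsets of $U\in\mathcal{T}$ being a covering of $U$ iff it admits a finite subfamily whose union is $U$. $\mathrm{Mod}(k_\mathcal{T})$ (resp. $\mathrm{Mod}(k_X)$) is the category of sheaves of $k$-vector spaces on $X_\mathcal{T}$ (resp. $X$). $\rho:X\to X_\mathcal{T}$ is the natural morphism of sites, $\rho_*F(U)=F(U)$ for $U\in\mathcal{T}$, and $\rho^{-1}$ is the left adjoint of $\rho_*$. *)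

From HB Require Import structures.
From mathcomp Require Import all_boot all_algebra.
From mathcomp Require Import boolp classical_sets topology.
Set Implicit Arguments. Unset Strict Implicit. Unset Printing Implicit Defensive.
Import GRing.Theory.
Local Open Scope classical_set_scope.
Local Open Scope ring_scope.

Section Defs.
Variable X : topologicalType.

Inductive Tsubset (T : set (set X)) : set X -> Prop :=
| Tsub_base U : T U -> Tsubset T U
| Tsub_compl A : Tsubset T A -> Tsubset T (~` A)
| Tsub_union A B : Tsubset T A -> Tsubset T B -> Tsubset T (A `|` B).

Definition open_in (Z A : set X) : Prop := exists O, open O /\ A = Z `&` O.
Definition closed_in (Z A : set X) : Prop := A `<=` Z /\ open_in Z (Z `\` A).
Definition clopen_in (Z A : set X) : Prop := open_in Z A /\ closed_in Z A.

Definition Tconnected (T : set (set X)) (Z : set X) : Prop :=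
  Tsubset T Z /\
  ~ (exists A B : set X,
        Tsubset T A /\ Tsubset T B /\ A <> Z /\ B <> Z /\
        A `|` B = Z /\ A `&` B = set0 /\ clopen_in Z A /\ clopen_in Z B).

(* U is the disjoint union of finitely many nonempty T-connected T-subsets,
   each open and closed in U (these are then its T-connected components) *)
Definition finite_Tcomponents (T : set (set X)) (U : set X) : Prop :=
  exists s : seq (set X),
    [/\ U = \bigcup_(V in [set` s]) V,
        (forall V, V \in s -> [/\ V !=set0, Tconnected T V & clopen_in U V]) &
        (forall i j, (i < size s)%N -> (j < size s)%N -> i <> j ->
           nth set0 s i `&` nth set0 s j = set0)].

Definition Tspace (T : set (set X)) : Prop :=
  [/\
      (forall U, T U -> open U),
      (forall U, open U -> forall x, U x -> exists V, [/\ T V, V x & V `<=` U]),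
      T set0,
      (forall U V, T U -> T V -> T (U `|` V)) /\ (forall U V, T U -> T V -> T (U `&` V)) &
      (forall U, T U -> finite_Tcomponents T U)].

Variable k : fieldType.

Record presheaf := Presheaf {
  sec : set X -> lmodType k;
  res : forall U V : set X, V `<=` U -> sec U -> sec V }.

Arguments res p [U V] _ _.

(* presheaf axioms on the category of subsets in Ob (morphisms = inclusions) *)
Definition is_presheaf (Ob : set (set X)) (F : presheaf) : Prop :=
  [/\ (forall U V (h : V `<=` U), Ob U -> Ob V ->
         forall (a : k) (s t : sec F U), res F h (a *: s + t) = a *: res F h s + res F h t),
      (forall U (h : U `<=` U), Ob U -> forall s, res F h s = s) &
      (forall U V W (hVU : V `<=` U) (hWV : W `<=` V) (hWU : W `<=` U),
         Ob U -> Ob V -> Ob W -> forall s, res F hWV (res F hVU s) = res F hWU s)].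

Definition glue_cond (F : presheaf) (U : set X) (I : Type) (Ui : I -> set X)
    (hs : forall i, Ui i `<=` U) : Prop :=
  forall s : forall i, sec F (Ui i),
    (forall i j, res F (@subIsetl _ (Ui i) (Ui j)) (s i)
               = res F (@subIsetr _ (Ui i) (Ui j)) (s j)) ->
    exists t : sec F U, (forall i, res F (hs i) t = s i) /\
      (forall t' : sec F U, (forall i, res F (hs i) t' = s i) -> t' = t).

Definition sheafX (F : presheaf) : Prop :=
  is_presheaf open F /\
  forall U, open U -> forall (I : Type) (Ui : I -> set X),
    (forall i, open (Ui i)) -> forall hs : (forall i, Ui i `<=` U),
    \bigcup_i Ui i = U -> @glue_cond F U I Ui hs.

(* sheaves on the site X_T: coverings are families in T admitting a finite
   subfamily whose union is U *)
Definition sheafT (T : set (set X)) (F : presheaf) : Prop :=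
  is_presheaf T F /\
  forall U, T U -> forall (I : Type) (Ui : I -> set X),
    (forall i, T (Ui i)) -> forall hs : (forall i, Ui i `<=` U),
    (exists (n : nat) (j : 'I_n -> I), \bigcup_(m in [set: 'I_n]) Ui (j m) = U) -> @glue_cond F U I Ui hs.

Definition mor (F G : presheaf) := forall U, sec F U -> sec G U.

Definition is_mor (Ob : set (set X)) (F G : presheaf) (f : mor F G) : Prop :=
  (forall U, Ob U -> forall (a : k) (s t : sec F U), f U (a *: s + t) = a *: f U s + f U t) /\
  (forall U V (h : V `<=` U), Ob U -> Ob V -> forall s, f V (res F h s) = res G h (f U s)).

Definition mor_eq (Ob : set (set X)) (F G : presheaf) (f g : mor F G) : Prop :=
  forall U, Ob U -> forall s, f U s = g U s.

Definition mor_comp (F G H : presheaf) (f : mor F G) (g : mor G H) : mor F H :=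
  fun U s => g U (f U s).

Definition mor_id (F : presheaf) : mor F F := fun U s => s.

(* rho_* : Mod(k_X) -> Mod(k_T), (rho_* F)(U) = F(U) for U in T *)
Definition rho_push (F : presheaf) : presheaf := F.
Definition rho_push_mor (F G : presheaf) (f : mor F G) : mor (rho_push F) (rho_push G) := f.

(* (L, eta) is a left adjoint of rho_* (given by universal arrows):
   for every sheaf G on X_T, L G is a sheaf on X, eta G : G -> rho_* (L G) and
   every morphism G -> rho_* F (F a sheaf on X) factors uniquely through eta G. *)
Definition left_adjoint_rho (T : set (set X)) (L : presheaf -> presheaf)
    (eta : forall G, mor G (rho_push (L G))) : Prop :=
  forall G, sheafT T G ->
    [/\ sheafX (L G), is_mor T (eta G) &
        forall F, sheafX F -> forall psi : mor G (rho_push F), is_mor T psi ->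
          exists phi : mor (L G) F,
            [/\ is_mor open phi,
                mor_eq T (mor_comp (eta G) (rho_push_mor phi)) psi &
                forall phi' : mor (L G) F, is_mor open phi' ->
                  mor_eq T (mor_comp (eta G) (rho_push_mor phi')) psi ->
                  mor_eq open phi' phi]].

Definition is_isoX (F G : presheaf) (f : mor F G) : Prop :=
  is_mor open f /\ exists g : mor G F,
    [/\ is_mor open g, mor_eq open (mor_comp f g) (@mor_id F) &
        mor_eq open (mor_comp g f) (@mor_id G)].

End Defs.
Arguments res [X k] p [U V] _ _.
Arguments mor_id [X k] F _ _.
Arguments left_adjoint_rho [X k] T L eta.
Arguments is_mor [X k] Ob [F G] f.
Arguments mor_eq [X k] Ob [F G] f g.
Arguments is_isoX [X k F G] f.
Arguments sheafX [X k] F.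
Arguments sheafT [X k] T F.

From HB Require Import structures.
From mathcomp Require Import all_boot all_algebra.
From mathcomp Require Import boolp classical_sets topology.
Local Open Scope classical_set_scope.

(* Only two features of a T-space are used: T is a basis of open sets closed
   under binary intersections.  Every open U is then covered by the members of
   T contained in U, and these pairwise intersect inside T, so a sheaf on X is
   determined on U by its values on T.  Hence a morphism given on T extends
   uniquely to open sets (rho_* is fully faithful).  For the counit
   eps : L (rho_* F) -> F, the extension g of the unit rho_* F -> rho_* (L F)
   is a two-sided inverse: g o eps and id both factor eta through itself, so
   they agree by the universal property, while eps o g is the identity on T,
   hence everywhere. *)

Section Morphisms.
Context {X : topologicalType} {k : fieldType}.

Lemma res_pi {G : presheaf X k} {U V : set X} (p q : V `<=` U) s : res G p s = res G q s.
Proof. by rewrite (Prop_irrelevance p q). Qed.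

Lemma res_comp {Ob : set (set X)} {G : presheaf X k} : is_presheaf Ob G ->
  forall U V W (hVU : V `<=` U) (hWV : W `<=` V), Ob U -> Ob V -> Ob W ->
  forall s, res G hWV (res G hVU s) = res G (fun x h => hVU x (hWV x h)) s.
Proof. by case=> _ _ Hcomp U V W hVU hWV oU oV oW s; exact: Hcomp. Qed.

Lemma sheafX_separated {G : presheaf X k} {U : set X} {I : Type} {Ui : I -> set X}
    (hs : forall i, Ui i `<=` U) :
  sheafX G -> open U -> (forall i, open (Ui i)) -> \bigcup_i Ui i = U ->
  forall t t' : sec G U, (forall i, res G (hs i) t = res G (hs i) t') -> t = t'.
Proof.
move=> [HP Hglue] oU oUi cov t t' Heq.
have [|t0 [_ Huniq]] := Hglue U oU I Ui oUi hs cov (fun i => res G (hs i) t').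
  by move=> i j; rewrite !(res_comp HP) //; [exact: res_pi | exact: openI..].
by rewrite (Huniq t Heq) (Huniq t' (fun i => erefl)).
Qed.

Lemma is_mor_id Ob (F : presheaf X k) : is_mor Ob (mor_id F).
Proof. by split. Qed.

Lemma is_mor_comp {Ob} {F G H : presheaf X k} {f : mor F G} {g : mor G H} :
  is_mor Ob f -> is_mor Ob g -> is_mor Ob (mor_comp f g).
Proof.
move=> [fl fn] [gl gn]; split.
  by move=> U oU a s t; rewrite /mor_comp fl // gl.
by move=> U V h oU oV s; rewrite /mor_comp fn // gn.
Qed.

End Morphisms.

Section OpenBasis.
Context {X : topologicalType} {k : fieldType} {T : set (set X)}.
Hypothesis T_open : forall {U}, T U -> open U.
Hypothesis T_basis : forall {U}, open U -> forall {x}, U x ->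
  exists V, [/\ T V, V x & V `<=` U].
Hypothesis T_setI : forall {U V}, T U -> T V -> T (U `&` V).

Definition basic_subset (U : set X) := {V : set X | T V /\ V `<=` U}.

Definition basic_subset_sub {U} (i : basic_subset U) : sval i `<=` U :=
  proj2 (svalP i).

Lemma basic_subset_open {U} (i : basic_subset U) : open (sval i).
Proof. exact: T_open (proj1 (svalP i)). Qed.

Lemma bigcup_basic_subset {U} : open U ->
  \bigcup_(i in [set: basic_subset U]) sval i = U.
Proof.
move=> oU; apply/seteqP; split => [x [i _]|x Ux]; first exact: basic_subset_sub.
have [V [TV Vx VU]] := T_basis oU Ux.
by exists (exist _ V (conj TV VU)).
Qed.

Lemma sheafX_separated_basis {G : presheaf X k} {U : set X} : sheafX G ->
  open U -> forall t t' : sec G U,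
  (forall V (TV : T V) (hVU : V `<=` U), res G hVU t = res G hVU t') -> t = t'.
Proof.
move=> HG oU t t' Heq.
apply: (sheafX_separated (@basic_subset_sub U) HG oU basic_subset_open
  (bigcup_basic_subset oU)) => i.
by apply: Heq; case: (svalP i).
Qed.

Lemma sheafX_sheafT {F : presheaf X k} : sheafX F -> sheafT T F.
Proof.
move=> [[Hlin Hid Hcomp] Hglue]; split.
  split=> [U V h TU TV|U h TU|U V W hVU hWV hWU TU TV TW].
  - exact: Hlin (T_open TU) (T_open TV).
  - exact: Hid (T_open TU).
  - exact: Hcomp (T_open TU) (T_open TV) (T_open TW).
move=> U TU I Ui TUi hs [n [j cov]].
apply: (Hglue U (T_open TU) I Ui) => [i|]; first exact: T_open.
apply/seteqP; split => [x [i _]|x]; first exact: hs.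
by rewrite -{1}cov => -[m _ Ux]; exists (j m).
Qed.

Lemma mor_eq_basis {F G : presheaf X k} : sheafX G ->
  forall {f g : mor F G}, is_mor open f -> is_mor open g ->
  mor_eq T f g -> mor_eq open f g.
Proof.
move=> HG f g [_ fn] [_ gn] Heq U oU s.
apply: (sheafX_separated_basis HG oU) => V TV hVU.
have oV := T_open TV.
by rewrite -(fn _ _ hVU oU oV) -(gn _ _ hVU oU oV) Heq.
Qed.

Section Extension.
Context {F G : presheaf X k} {h : mor F G}.
Hypotheses (HF : sheafX F) (HG : sheafX G).
Hypothesis Hh : is_mor T h.

Definition extends_on_basis {U} (s : sec F U) (t : sec G U) :=
  forall V (TV : T V) (hVU : V `<=` U), res G hVU t = h V (res F hVU s).

Lemma extends_on_basis_uniq {U} : open U -> forall (s : sec F U) (t t' : sec G U),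
  extends_on_basis s t -> extends_on_basis s t' -> t = t'.
Proof.
move=> oU s t t' Ht Ht'; apply: (sheafX_separated_basis HG oU) => V TV hVU.
by rewrite (Ht V TV) (Ht' V TV).
Qed.

(* The sections h V (s|V), V in T, V <= U, are compatible because h commutes
   with restriction to V `&` W, which lies in T again. *)
Lemma extends_on_basis_exists {U} : open U ->
  forall s : sec F U, exists t, extends_on_basis s t.
Proof.
move=> oU s; have [HPF _] := HF; have [_ Hglue] := HG; have [_ hn] := Hh.
have [|t [Ht _]] := Hglue U oU _ _ basic_subset_open basic_subset_sub
  (bigcup_basic_subset oU) (fun i => h (sval i) (res F (basic_subset_sub i) s)).
  move=> i j; have [Ti _] := svalP i; have [Tj _] := svalP j.
  have Tij := T_setI Ti Tj.
  rewrite -!hn // !(res_comp HPF) //; try exact: T_open.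
  by congr (h _ _); exact: res_pi.
exists t => V TV hVU.
pose i : basic_subset U := exist _ V (conj TV hVU).
by rewrite (res_pi hVU (basic_subset_sub i)) (Ht i) (res_pi (basic_subset_sub i) hVU).
Qed.

(* Off the open sets the value is irrelevant; 0 is a placeholder. *)
Definition extension : mor F G := fun U s =>
  match pselect (open U) with
  | left oU => sval (cid (extends_on_basis_exists oU s))
  | right _ => 0%R
  end.

Lemma extensionP {U} : open U -> forall s : sec F U, extends_on_basis s (extension U s).
Proof.
move=> oU s; rewrite /extension; case: pselect => // oU'.
exact: svalP (cid (extends_on_basis_exists oU' s)).
Qed.

Lemma extension_eq {U} : open U -> forall (s : sec F U) (t : sec G U),
  extends_on_basis s t -> extension U s = t.
Proof. by move=> oU s t; apply: extends_on_basis_uniq oU s _ _ (extensionP oU s). Qed.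

Lemma is_mor_extension : is_mor open extension.
Proof.
have [HPF _] := HF; have [HPG _] := HG; have [hl _] := Hh.
have [Flin _ _] := HPF; have [Glin _ _] := HPG.
split=> [U oU a s t|U W hWU oU oW s];
  apply: extension_eq => // V TV hVU; have oV := T_open TV.
- by rewrite Glin // (extensionP oU s V TV) (extensionP oU t V TV) Flin // hl.
- by rewrite (res_comp HPG) // (extensionP oU s V TV) (res_comp HPF).
Qed.

Lemma extension_basis : mor_eq T extension h.
Proof.
have [_ hn] := Hh.
by move=> U TU s; apply: extension_eq (T_open TU) _ _ _ => V TV hVU; rewrite hn.
Qed.

End Extension.

Lemma counit_is_isoX (L : presheaf X k -> presheaf X k)
    (eta : forall G, mor G (rho_push (L G))) :
  left_adjoint_rho T L eta -> forall F : presheaf X k, sheafX F ->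
  forall eps : mor (L (rho_push F)) F, is_mor open eps ->
  mor_eq T (mor_comp (eta (rho_push F)) (rho_push_mor eps)) (mor_id (rho_push F)) ->
  is_isoX eps.
Proof.
move=> Hadj F HF eps Heps Hcounit.
have [HL Heta Huniv] := Hadj F (sheafX_sheafT HF).
have Hg := is_mor_extension HF HL Heta.
have Hg_eta := extension_basis HF HL Heta.
set g := extension HF HL Heta in Hg Hg_eta.
have eps_g_eta : mor_eq T (mor_comp (eta F) (rho_push_mor (mor_comp eps g))) (eta F).
  move=> V TV t; have := Hcounit V TV t.
  by rewrite /mor_comp /rho_push_mor /mor_id => ->; exact: Hg_eta.
split => //; exists g; split => //.
- have [phi [_ _ Hphi]] := Huniv _ HL (eta F) Heta.
  move=> U oU s; rewrite (Hphi _ (is_mor_comp Heps Hg) eps_g_eta) //.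
  by rewrite (Hphi _ (is_mor_id open (L F))).
- apply: (mor_eq_basis HF (is_mor_comp Hg Heps) (is_mor_id open F)).
  by move=> V TV t; rewrite /mor_comp Hg_eta //; exact: Hcounit.
Qed.

End OpenBasis.

Theorem mainTheorem11 (k : fieldType) (X : topologicalType) (T : set (set X))
    (HT : Tspace T)
    (L : presheaf X k -> presheaf X k) (eta : forall G, mor G (rho_push (L G)))
    (Hadj : left_adjoint_rho T L eta) :
  (forall F : presheaf X k, sheafX F ->
     forall eps : mor (L (rho_push F)) F, is_mor open eps ->
       mor_eq T (mor_comp (eta (rho_push F)) (rho_push_mor eps)) (mor_id (rho_push F)) ->
       is_isoX eps) /\
  (forall F G : presheaf X k, sheafX F -> sheafX G ->
     (forall f g : mor F G, is_mor open f -> is_mor open g ->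
        mor_eq T (rho_push_mor f) (rho_push_mor g) -> mor_eq open f g) /\
     (forall h : mor (rho_push F) (rho_push G), is_mor T h ->
        exists f : mor F G, is_mor open f /\ mor_eq T (rho_push_mor f) h)).
Proof.
have [T_open T_basis _ [_ T_setI] _] := HT.
split; first exact: counit_is_isoX.
move=> F G HF HG; split; first exact: mor_eq_basis.
move=> h Hh; exists (extension T_open T_basis T_setI HF HG Hh).
by split; [exact: is_mor_extension | exact: extension_basis].
Qed.
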